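(* Let $\mathbb K$ be a field with $2\in\mathbb K^\times$, $A$ a unital commutative associative $\mathbb K$-algebra, $\mathfrak k$ a $\mathbb K$-Lie algebra and $\mathfrak g=A\otimes\mathfrak k$. For $a,b,c\in A$ and $x,y,z\in\mathfrak k$, $$p_1(\partial(ax\wedge by\wedge cz))\equiv p_1(abc\,x\wedge[y,z])\equiv-p_2(\partial(ax\wedge by\wedge cz))\mod B_2(\mathfrak g).$$ In particular $(p_1+p_2)(B_2(\mathfrak g))\subseteq B_2(\mathfrak g)$.
   Context: $\mathfrak g$ has bracket $[a\otimes x,a'\otimes x']=aa'\otimes[x,x']$, $ax=a\otimes x$, unit $\mathbf 1$. $v\wedge w=\tfrac12(v\otimes w-w\otimes v)$, $v\vee w=\tfrac12(v\otimes w+w\otimes v)$. $\partial:\Lambda^3(\mathfrak g)\to\Lambda^2(\mathfrak g)$, $u\wedge v\wedge w\mapsto[u,v]\wedge w+[v,w]\wedge u+[w,u]\wedge v$, and $B_2(\mathfrak g)=\mathrm{im}\,\partial$. $I_A$ is the kernel of multiplication $S^2(A)\to A$. The subspaces $\Lambda^2(A)\otimes S^2(\mathfrak k)$, $A\otimes\Lambda^2(\mathfrak k)$, $I_A\otimes\Lambda^2(\mathfrak k)$ are regarded as subspaces of $\Lambda^2(\mathfrak g)$ via $a\wedge b\otimes x\vee y\mapsto\tfrac12(ax\wedge by+ay\wedge bx)$, $a\otimes x\wedge y\mapsto\tfrac12(ax\wedge\mathbf 1y-ay\wedge\mathbf 1x)$, $a\vee b\otimes x\wedge y\mapsto\tfrac12(ax\wedge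 by-ay\wedge bx)$; then $\Lambda^2(\mathfrak g)$ is their direct sum and $p_1,p_2,p_3$ are the corresponding projections, given by $p_1(ax\wedge by)=a\wedge b\otimes x\vee y$, $p_2(ax\wedge by)=ab\otimes x\wedge y$, $p_3(ax\wedge by)=(a\vee b-ab\vee\mathbf 1)\otimes x\wedge y$. *)

From HB Require Import structures.
From mathcomp Require Import all_boot all_algebra.
Set Implicit Arguments. Unset Strict Implicit. Unset Printing Implicit Defensive.
Import GRing.Theory.
Local Open Scope ring_scope.

Section Defs.
Variable K : fieldType.

Definition bilinear_map (U V W : lmodType K) (f : U -> V -> W) : Prop :=
  (forall v, linear (fun u => f u v)) /\ (forall u, linear (f u)).

Definition lie_bracket (L : lmodType K) (br : L -> L -> L) : Prop :=
  [/\ bilinear_map br, (forall x, br x x = 0) &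
      (forall x y z, br x (br y z) + br y (br z x) + br z (br x y) = 0)].

Definition is_tensor_product (U V T : lmodType K) (t : U -> V -> T) : Prop :=
  [/\ bilinear_map t,
      (forall v : T, exists s : seq (U * V), v = \sum_(p <- s) t p.1 p.2) &
      (forall (W : lmodType K) (f : U -> V -> W), bilinear_map f ->
         exists h : T -> W, linear h /\ forall u v, h (t u v) = f u v)].

Definition is_exterior_square (V E : lmodType K) (w : V -> V -> E) : Prop :=
  [/\ bilinear_map w, (forall v, w v v = 0),
      (forall e : E, exists s : seq (V * V), e = \sum_(p <- s) w p.1 p.2) &
      (forall (W : lmodType K) (f : V -> V -> W), bilinear_map f ->
         (forall v, f v v = 0) ->
         exists h : E -> W, linear h /\ forall u v, h (w u v) = f u v)].

Definition bdry (g E : lmodType K) (br : g -> g -> g) (w : g -> g -> E)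
  (u v z : g) : E :=
  w (br u v) z + w (br v z) u + w (br z u) v.

(* B_2(g) = im d ; every element of Lambda^3 is a sum of pure wedges *)
Definition B2 (g E : lmodType K) (br : g -> g -> g) (w : g -> g -> E)
  (e : E) : Prop :=
  exists s : seq (g * g * g), e = \sum_(p <- s) bdry br w p.1.1 p.1.2 p.2.

End Defs.

From HB Require Import structures.
From mathcomp Require Import all_boot all_algebra.
From mathcomp Require Import ring.
Set Implicit Arguments.
Unset Strict Implicit.
Unset Printing Implicit Defensive.
Import GRing.Theory.
Local Open Scope ring_scope.

(* Both congruences are witnessed by explicit boundaries. Expanding with
   [a x, b y] = ab [x, y] and the formulas for p1 and p2 on pure wedges,
   p1 d(ax /\ by /\ cz) - p1 (abc x /\ [y, z]) is one half of a signed sum of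
   six boundaries of pure tensors, and p1 (abc x /\ [y, z]) + p2 d(ax /\ by /\ cz)
   is one half of d(x /\ abc y /\ z) + d(x /\ y /\ abc z). Adding the two,
   p1 + p2 maps boundaries of pure tensors into B_2; since d is additive in each
   argument, pure tensors span g and p1 + p2 is linear, it maps B_2 into B_2. *)

Inductive lmod_expr (R : Type) : Type :=
  | LAtom of nat
  | LZero
  | LAdd of lmod_expr R & lmod_expr R
  | LOpp of lmod_expr R
  | LScale of R & lmod_expr R.

Section LinearCombinations.
Variables (K : fieldType) (V : lmodType K) (atoms : seq V).

Fixpoint lmod_eval (e : lmod_expr K) : V :=
  match e with
  | LAtom i => atoms`_i
  | LZero => 0
  | LAdd e1 e2 => lmod_eval e1 + lmod_eval e2
  | LOpp e1 => - lmod_eval e1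
  | LScale c e1 => c *: lmod_eval e1
  end.

(* Atom [i] is encoded as the monomial ['X^i]: the coefficient of ['X^i] in
   [lmod_coefs e] is the coefficient of [atoms`_i] in [e], so two expressions
   with equal polynomials, which [ring] decides, have equal values. *)
Fixpoint lmod_coefs (e : lmod_expr K) : {poly K} :=
  match e with
  | LAtom i => 'X^i
  | LZero => 0
  | LAdd e1 e2 => lmod_coefs e1 + lmod_coefs e2
  | LOpp e1 => - lmod_coefs e1
  | LScale c e1 => c%:P * lmod_coefs e1
  end.

Definition lincomb (p : {poly K}) : V := \sum_(i < size atoms) p`_i *: atoms`_i.

Lemma lincomb_is_linear : linear lincomb.
Proof.
move=> c p q; rewrite /lincomb scaler_sumr -big_split /=.
by apply: eq_bigr => i _; rewrite coefD coefZ scalerDl scalerA.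
Qed.

HB.instance Definition _ :=
  GRing.isLinear.Build K {poly K} V *:%R lincomb lincomb_is_linear.

Lemma lincombXn i : lincomb 'X^i = atoms`_i.
Proof.
rewrite /lincomb; have [lt_i_s | le_s_i] := ltnP i (size atoms).
  rewrite (bigD1 (Ordinal lt_i_s)) //= coefXn eqxx scale1r big1 ?addr0 //.
  by move=> j; rewrite -(inj_eq val_inj) coefXn /= => /negbTE->; rewrite scale0r.
rewrite nth_default // big1 // => j _.
have /negbTE neq_ji : (j : nat) != i.
  by rewrite neq_ltn (leq_trans (ltn_ord j) le_s_i).
by rewrite coefXn neq_ji scale0r.
Qed.

Lemma lmod_evalE e : lmod_eval e = lincomb (lmod_coefs e).
Proof.
elim: e => [i||e1 IH1 e2 IH2|e1 IH1|c e1 IH1] /=.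
- by rewrite lincombXn.
- by rewrite linear0.
- by rewrite linearD IH1 IH2.
- by rewrite linearN IH1.
- by rewrite mul_polyC linearZ IH1.
Qed.

Lemma lmod_eval_eq e1 e2 :
  lmod_coefs e1 = lmod_coefs e2 -> lmod_eval e1 = lmod_eval e2.
Proof. by rewrite !lmod_evalE => ->. Qed.

End LinearCombinations.

Ltac lmod_mem x l :=
  lazymatch l with
  | nil => constr:(false)
  | x :: _ => constr:(true)
  | _ :: ?l' => lmod_mem x l'
  end.

Ltac lmod_index x l :=
  lazymatch l with
  | x :: _ => constr:(0%N)
  | _ :: ?l' => let n := lmod_index x l' in constr:(n.+1)
  end.

Ltac lmod_atoms e l :=
  lazymatch e with
  | ?e1 + ?e2 => let l1 := lmod_atoms e1 l in lmod_atoms e2 l1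
  | - ?e1 => lmod_atoms e1 l
  | _ *: ?e1 => lmod_atoms e1 l
  | 0 => l
  | _ => let b := lmod_mem e l in
         lazymatch b with true => l | false => constr:(e :: l) end
  end.

Ltac lmod_reify K e l :=
  lazymatch e with
  | ?e1 + ?e2 =>
      let r1 := lmod_reify K e1 l in let r2 := lmod_reify K e2 l in
      constr:(@LAdd K r1 r2)
  | - ?e1 => let r1 := lmod_reify K e1 l in constr:(@LOpp K r1)
  | ?c *: ?e1 => let r1 := lmod_reify K e1 l in constr:(@LScale K c r1)
  | 0 => constr:(@LZero K)
  | _ => let i := lmod_index e l in constr:(@LAtom K i)
  end.

Ltac lmod_eq K :=
  lazymatch goal with |- ?x = ?y =>
    let T := type of x in
    let l := lmod_atoms x (@nil T) in
    let l := lmod_atoms y l in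
    let ex := lmod_reify K x l in
    let ey := lmod_reify K y l in
    change (lmod_eval l ex = lmod_eval l ey); apply: lmod_eval_eq => /=; ring
  end.

Section Alternating.
Variables (K : fieldType) (U V : lmodType K) (f : U -> U -> V).
Hypotheses (f_bil : bilinear_map f) (f_alt : forall u, f u u = 0).

HB.instance Definition _ :=
  bilinear_isBilinear.Build K U U V *:%R *:%R f (f_bil.1, f_bil.2).

Lemma alternating_skew u v : f u v = - f v u.
Proof.
apply/eqP; rewrite -addr_eq0; have := f_alt (u + v).
by rewrite linearDl !linearDr /= !f_alt add0r addr0 => ->.
Qed.

End Alternating.

Section Boundary.
Variables (K : fieldType) (g E : lmodType K) (br : g -> g -> g) (w : g -> g -> E).

Local Notation bd := (bdry br w).
Local Notation B2 := (B2 br w).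

Lemma bdry_cycle u v z : bd u v z = bd v z u.
Proof. by rewrite /bdry [RHS]addrC addrA. Qed.

Lemma B2_0 : B2 0.
Proof. by exists [::]; rewrite big_nil. Qed.

Lemma B2D e1 e2 : B2 e1 -> B2 e2 -> B2 (e1 + e2).
Proof. by move=> [s1 ->] [s2 ->]; exists (s1 ++ s2); rewrite big_cat. Qed.

Lemma bdry_B2 u v z : B2 (bd u v z).
Proof. by exists [:: (u, v, z)]; rewrite big_seq1. Qed.

Lemma B2_ind (Q : E -> Prop) :
  Q 0 -> (forall e1 e2, Q e1 -> Q e2 -> Q (e1 + e2)) ->
  (forall u v z, Q (bd u v z)) -> forall e, B2 e -> Q e.
Proof.
move=> Q0 QD Qbd _ [s ->]; elim: s => [|[[u v] z] s IHs]; first by rewrite big_nil.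
by rewrite big_cons; apply: QD.
Qed.

Hypotheses (br_bil : bilinear_map br) (w_bil : bilinear_map w).

HB.instance Definition _ :=
  bilinear_isBilinear.Build K g g g *:%R *:%R br (br_bil.1, br_bil.2).
HB.instance Definition _ :=
  bilinear_isBilinear.Build K g g E *:%R *:%R w (w_bil.1, w_bil.2).

Lemma bdry0l v z : bd 0 v z = 0.
Proof. by rewrite /bdry !(linear0l, linear0r) !addr0. Qed.

Lemma bdryDl u1 u2 v z : bd (u1 + u2) v z = bd u1 v z + bd u2 v z.
Proof. by rewrite /bdry !(linearDl, linearDr) /=; lmod_eq K. Qed.

Lemma bdryZl c u v z : bd (c *: u) v z = c *: bd u v z.
Proof. by rewrite /bdry !(linearZl_LR, linearZr_LR) /= !scalerDr. Qed.

Lemma B2Z c e : B2 e -> B2 (c *: e).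
Proof.
move=> [s ->]; exists [seq (c *: p.1.1, p.1.2, p.2) | p <- s].
by rewrite big_map scaler_sumr; apply: eq_bigr => p _; rewrite bdryZl.
Qed.

Lemma B2B e1 e2 : B2 e1 -> B2 e2 -> B2 (e1 - e2).
Proof. by move=> B2e1 /(B2Z (-1)); rewrite scaleN1r; apply: B2D. Qed.

Section Generators.
Variables (X : Type) (gen : X -> g).
Hypothesis gen_span : forall u, exists s : seq X, u = \sum_(p <- s) gen p.

Lemma bdry_gen_ind (Q : E -> Prop) :
  Q 0 -> (forall e1 e2, Q e1 -> Q e2 -> Q (e1 + e2)) ->
  (forall p q r, Q (bd (gen p) (gen q) (gen r))) -> forall u v z, Q (bd u v z).
Proof.
move=> Q0 QD Qgen.
have gen_l v z : (forall p, Q (bd (gen p) v z)) -> forall u, Q (bd u v z).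
  move=> Qv u; have [s ->] := gen_span u; elim: s => [|p s IHs].
    by rewrite big_nil bdry0l.
  by rewrite big_cons bdryDl; apply: QD.
move=> u v z; apply: (gen_l) => p; rewrite bdry_cycle.
apply: (gen_l) => q; rewrite bdry_cycle.
by apply: (gen_l) => r; rewrite bdry_cycle.
Qed.

End Generators.

End Boundary.

Section CurrentAlgebra.
Variables (K : fieldType) (A : comAlgType K) (k g L2 : lmodType K).
Variables (brk : k -> k -> k) (t : A -> k -> g) (brg : g -> g -> g).
Variables (w : g -> g -> L2) (p1 p2 : L2 -> L2).
Hypotheses (brg_bil : bilinear_map brg) (w_bil : bilinear_map w).
Hypothesis w_alt : forall u, w u u = 0.
Hypothesis t_span : forall u, exists s : seq (A * k), u = \sum_(p <- s) t p.1 p.2.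
Hypothesis brg_pure : forall a b x y, brg (t a x) (t b y) = t (a * b) (brk x y).
Hypotheses (p1_lin : linear p1) (p2_lin : linear p2).
Hypothesis p1_pure : forall a b x y, p1 (w (t a x) (t b y)) =
  (2%:R : K)^-1 *: (w (t a x) (t b y) + w (t a y) (t b x)).
Hypothesis p2_pure : forall a b x y, p2 (w (t a x) (t b y)) =
  (2%:R : K)^-1 *: (w (t (a * b) x) (t 1 y) - w (t (a * b) y) (t 1 x)).

HB.instance Definition _ := GRing.isLinear.Build K L2 L2 *:%R p1 p1_lin.
HB.instance Definition _ := GRing.isLinear.Build K L2 L2 *:%R p2 p2_lin.

Local Notation bd := (bdry brg w).
Local Notation B2 := (B2 brg w).
Local Notation half := ((2%:R : K)^-1).

Lemma p1_bdry_sub_p1_wedge a b c x y z :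
  p1 (bd (t a x) (t b y) (t c z)) - p1 (w (t (a * b * c) x) (t 1 (brk y z))) =
  half *: (bd (t (a * b * c) x) (t 1 y) (t 1 z) + bd (t a x) (t b y) (t c z)
           - bd (t (b * c) x) (t a y) (t 1 z) + bd (t c x) (t a y) (t b z)
           - bd (t 1 x) (t (c * a) y) (t b z) - bd (t c x) (t 1 y) (t (a * b) z)).
Proof.
have bca : b * c * a = a * b * c by rewrite mulrC mulrA.
have cab : c * a * b = a * b * c by rewrite -mulrA mulrC.
rewrite /bdry !brg_pure !(linearB, linearD) /= !p1_pure !(mul1r, mulr1) bca cab.
rewrite !(alternating_skew w_bil w_alt (t _ (brk _ _))).
lmod_eq K.
Qed.

Lemma p1_wedge_add_p2_bdry a b c x y z :
  p1 (w (t (a * b * c) x) (t 1 (brk y z))) + p2 (bd (t a x) (t b y) (t c z)) =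
  half *: (bd (t 1 x) (t (a * b * c) y) (t 1 z) + bd (t 1 x) (t 1 y) (t (a * b * c) z)).
Proof.
have bca : b * c * a = a * b * c by rewrite mulrC mulrA.
have cab : c * a * b = a * b * c by rewrite -mulrA mulrC.
rewrite /bdry !brg_pure !linearD /= p1_pure !p2_pure !(mul1r, mulr1) bca cab.
rewrite !(alternating_skew w_bil w_alt (t _ (brk _ _))).
lmod_eq K.
Qed.

Lemma B2_p1_bdry_sub_p1_wedge a b c x y z :
  B2 (p1 (bd (t a x) (t b y) (t c z)) - p1 (w (t (a * b * c) x) (t 1 (brk y z)))).
Proof.
rewrite p1_bdry_sub_p1_wedge; apply: (B2Z brg_bil w_bil).
by do ![apply: bdry_B2 | apply: (B2B brg_bil w_bil) | apply: B2D].
Qed.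

Lemma B2_p1_wedge_add_p2_bdry a b c x y z :
  B2 (p1 (w (t (a * b * c) x) (t 1 (brk y z))) + p2 (bd (t a x) (t b y) (t c z))).
Proof.
rewrite p1_wedge_add_p2_bdry; apply: (B2Z brg_bil w_bil).
by apply: B2D; apply: bdry_B2.
Qed.

Lemma B2_p1_add_p2 e : B2 e -> B2 (p1 e + p2 e).
Proof.
pose Q e := B2 (p1 e + p2 e).
have Q0 : Q 0 by rewrite /Q !linear0 addr0; apply: B2_0.
have QD e1 e2 : Q e1 -> Q e2 -> Q (e1 + e2).
  by rewrite /Q !linearD addrACA; apply: B2D.
apply: (B2_ind Q0 QD); apply: (bdry_gen_ind brg_bil w_bil t_span Q0 QD).
move=> [a x] [b y] [c z] /=; rewrite /Q.
set W := p1 (w (t (a * b * c) x) (t 1 (brk y z))).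
rewrite -(subrK W (p1 _)) -addrA; apply: B2D.
  exact: B2_p1_bdry_sub_p1_wedge.
exact: B2_p1_wedge_add_p2_bdry.
Qed.

End CurrentAlgebra.

Theorem lemma2p2 (K : fieldType) (A : comAlgType K) (k g L2 : lmodType K)
  (brk : k -> k -> k) (t : A -> k -> g) (brg : g -> g -> g)
  (w : g -> g -> L2) (p1 p2 : L2 -> L2) :
  (2%:R : K) != 0 ->
  lie_bracket brk ->
  is_tensor_product t ->
  bilinear_map brg ->
  (forall a b x y, brg (t a x) (t b y) = t (a * b) (brk x y)) ->
  is_exterior_square w ->
  linear p1 ->
  (forall a b x y, p1 (w (t a x) (t b y)) =
     (2%:R : K)^-1 *: (w (t a x) (t b y) + w (t a y) (t b x))) ->
  linear p2 ->
  (forall a b x y, p2 (w (t a x) (t b y)) =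
     (2%:R : K)^-1 *: (w (t (a * b) x) (t 1 y) - w (t (a * b) y) (t 1 x))) ->
  (forall (a b c : A) (x y z : k),
     B2 brg w (p1 (bdry brg w (t a x) (t b y) (t c z))
               - p1 (w (t (a * b * c) x) (t 1 (brk y z))))
     /\
     B2 brg w (p1 (w (t (a * b * c) x) (t 1 (brk y z)))
               + p2 (bdry brg w (t a x) (t b y) (t c z))))
  /\ (forall e : L2, B2 brg w e -> B2 brg w (p1 e + p2 e)).
Proof.
move=> _ _ [_ t_span _] brg_bil brg_pure [w_bil w_alt _ _].
move=> p1_lin p1_pure p2_lin p2_pure.
split=> [a b c x y z|e]; first split.
- exact: (B2_p1_bdry_sub_p1_wedge brg_bil w_bil w_alt brg_pure p1_lin p1_pure).
- exact: (B2_p1_wedge_add_p2_bdry brg_bil w_bil w_alt brg_pure p2_lin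
          p1_pure p2_pure).
- exact: (B2_p1_add_p2 brg_bil w_bil w_alt t_span brg_pure p1_lin p2_lin
          p1_pure p2_pure).
Qed.
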